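(* Fix an epoch $t$ and a parameter vector $\theta^t\in\mathbb{R}^P$. Assume there are constants $\kappa_l>0$, $l\in\mathcal{L}$, such that $\|\nabla_l f(\theta^t)-\nabla_l f_i(\theta^t)\|^2\le\kappa_l^2$ for all $i\in\mathcal{N}$ and $l\in\mathcal{L}$. Then $$\mathcal{E}_t:=\Big\|\nabla f(\theta^t)-\sum_{l\in\mathcal{L}_t}\nabla_l h_l^t(\theta^t)\Big\|^2 \le 2\,\mathcal{E}_{t,1}+2\,\mathcal{E}_{t,2},$$ where $\mathcal{E}_{t,1}=\big\|\sum_{l\notin\mathcal{L}_t}\nabla_l f(\theta^t)\big\|^2$ and $\mathcal{E}_{t,2}=\sum_{l\in\mathcal{L}_t}\chi_{\mathbf{w}_{t,l}\|\alpha}\,\kappa_l^2$ with $\chi_{\mathbf{w}_{t,l}\|\alpha}=\sum_{i\in\mathcal{N}}\frac{(w_{i,l}^t-\alpha_i)^2}{\alpha_i}$.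
   Context: There are $N$ clients $\mathcal{N}=\{1,\dots,N\}$; client $i$ has $d_i>0$ samples and local objective $f_i:\mathbb{R}^P\to\mathbb{R}$ (differentiable). Let $\alpha_i=d_i/\sum_{j=1}^N d_j$ and $f=\sum_{i=1}^N\alpha_i f_i$. The parameter vector $\theta\in\mathbb{R}^P$ is partitioned into $L$ layers (blocks) indexed by $\mathcal{L}=\{1,\dots,L\}$; $\nabla_l F(\theta)$ denotes the gradient of $F$ with respect to the block of layer $l$, viewed as a vector of $\mathbb{R}^P$ with zeros outside that block. In epoch $t$, a set $\mathcal{S}^t\subseteq\mathcal{N}$ of clients participates, each $i\in\mathcal{S}^t$ has a selected layer set $\mathcal{L}_i^t\subseteq\mathcal{L}$, and $\mathcal{L}_t=\bigcup_{i\in\mathcal{S}^t}\mathcal{L}_i^t$. Weights: $w_{i,l}^t=d_i/\sum_{j\in\mathcal{S}^t:\,l\in\mathcal{L}_j^t}d_j$ if $i\in\mathcal{S}^t$ and $l\in\mathcal{L}_i^t$, and $w_{i,l}^t=0$ otherwise (for all $i\in\mathcal{N}$). Surrogate objective: $h_l^t(\theta)=\sum_{i\in\mathcal{S}^t}w_{i,l}^t f_i(\theta)$. *)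

From HB Require Import structures.
From mathcomp Require Import all_boot all_order all_algebra.
From mathcomp Require Import all_classical all_reals all_analysis.
Set Implicit Arguments. Unset Strict Implicit. Unset Printing Implicit Defensive.
Import Order.TTheory GRing.Theory Num.Theory.
Import numFieldNormedType.Exports.
Local Open Scope ring_scope.

Section FL.
Variable R : realType.

Definition sqnorm (P : nat) (v : 'rV[R]_P) : R := \sum_(j < P) (v ord0 j) ^+ 2.

Definition grad (P : nat) (F : 'rV[R]_P -> R) (x : 'rV[R]_P) : 'rV[R]_P :=
  \row_(j < P) ('d F x : 'rV[R]_P -> R) (delta_mx ord0 j).

(* Block gradient nabla_l F(x): the gradient restricted to the coordinates
   of layer l (blk j = layer of coordinate j), zero elsewhere. *)
Definition grad_blk (P L : nat) (blk : 'I_P -> 'I_L) (l : 'I_L)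
  (F : 'rV[R]_P -> R) (x : 'rV[R]_P) : 'rV[R]_P :=
  \row_(j < P) (if blk j == l then grad F x ord0 j else 0).

Definition alpha (N : nat) (d : 'I_N -> nat) (i : 'I_N) : R :=
  (d i)%:R / (\sum_(j < N) (d j)%:R).

Definition fglob (P N : nat) (d : 'I_N -> nat) (f : 'I_N -> 'rV[R]_P -> R)
  : 'rV[R]_P -> R := fun x => \sum_(i < N) alpha d i * f i x.

Definition weight (N L : nat) (d : 'I_N -> nat) (S : {set 'I_N})
  (Ls : 'I_N -> {set 'I_L}) (i : 'I_N) (l : 'I_L) : R :=
  if (i \in S) && (l \in Ls i)
  then (d i)%:R / (\sum_(j in S | l \in Ls j) (d j)%:R)
  else 0.

Definition hsur (P N L : nat) (d : 'I_N -> nat) (S : {set 'I_N})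
  (Ls : 'I_N -> {set 'I_L}) (f : 'I_N -> 'rV[R]_P -> R) (l : 'I_L)
  : 'rV[R]_P -> R := fun x => \sum_(i in S) weight d S Ls i l * f i x.

Definition Lunion (N L : nat) (S : {set 'I_N}) (Ls : 'I_N -> {set 'I_L})
  : {set 'I_L} := \bigcup_(i in S) Ls i.

Definition chi2 (N L : nat) (d : 'I_N -> nat) (S : {set 'I_N})
  (Ls : 'I_N -> {set 'I_L}) (l : 'I_L) : R :=
  \sum_(i < N) (weight d S Ls i l - alpha d i) ^+ 2 / alpha d i.

End FL.
Arguments chi2 {R N L} d S Ls l.
Arguments alpha {R N} d i.
Arguments weight {R N L} d S Ls i l.

From HB Require Import structures.
From mathcomp Require Import all_boot all_order all_algebra.
From mathcomp Require Import all_classical all_reals all_analysis.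
From mathcomp Require Import ring lra.
Import Order.TTheory GRing.Theory Num.Theory.
Import numFieldNormedType.Exports.
Local Open Scope ring_scope.

(* Write g = grad f(theta) = sum_i alpha_i g_i and h_l = grad h_l(theta) =
   sum_i w_il g_i.  The error vector splits into orthogonal layer blocks: on a
   layer outside L_t it is the block of g, on a selected layer l the block of
   g - h_l.  As both weight vectors w_l and alpha sum to one,
   g - h_l = sum_i (w_il - alpha_i) (g - g_i), and the weighted Cauchy-Schwarz
   inequality (sum_i c_i v_i)^2 <= (sum_i c_i^2 / alpha_i) (sum_i alpha_i v_i^2)
   bounds the squared norm of its block by chi(w_l || alpha) kappa_l^2.  The
   bound in fact holds with 1 in place of both factors 2. *)

Lemma sum_if_eq {M : nmodType} {I : finType} (P : pred I) (i0 : I) (F : I -> M) :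
  \sum_(i | P i) (if i0 == i then F i else 0) = if P i0 then F i0 else 0.
Proof.
rewrite -big_mkcondr; case: ifP => P_i0.
  rewrite (big_pred1 i0) // => i /=.
  by rewrite eq_sym; case: eqP => [->|]; rewrite ?andbT ?andbF.
by rewrite big_pred0 // => i; apply/andP => -[Pi /eqP i0i]; rewrite i0i Pi in P_i0.
Qed.

Lemma sumr_nat_gt0 {R : numDomainType} {I : finType} (Q : pred I) (d : I -> nat) i0 :
  Q i0 -> (0 < d i0)%N -> 0 < \sum_(i | Q i) (d i)%:R :> R.
Proof.
by move=> Q_i0 d_i0; rewrite (bigD1 i0) //= ltr_wpDr ?sumr_ge0 ?ltr0n.
Qed.

Lemma sub_combE {R : pzRingType} {V : lmodType R} {I : finType}
    (g : V) (a w : I -> R) (u : I -> V) :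
  \sum_i w i = \sum_i a i ->
  \sum_i a i *: u i - \sum_i w i *: u i = \sum_i (w i - a i) *: (g - u i).
Proof.
move=> sum_wa; under [in RHS]eq_bigr do rewrite scalerBr.
rewrite sumrB -scaler_suml sumrB sum_wa subrr scale0r sub0r.
by under [in RHS]eq_bigr do rewrite scalerBl; rewrite sumrB opprB.
Qed.

Lemma sqr_sum_le_weighted (R : realFieldType) (I : finType) (a c v : I -> R) :
  (forall i, 0 < a i) ->
  (\sum_i c i * v i) ^+ 2 <= (\sum_i c i ^+ 2 / a i) * (\sum_i a i * v i ^+ 2).
Proof.
move=> a_gt0.
pose X i k := c i ^+ 2 / a i * (a k * v k ^+ 2).
pose Z i k := c i * v i * (c k * v k).
(* Lagrange's identity for x_i = c_i / sqrt (a_i) and y_i = sqrt (a_i) v_i. *)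
have lagrange : \sum_i \sum_k (c i * a k * v k - c k * a i * v i) ^+ 2 / (a i * a k)
    = 2 * ((\sum_i c i ^+ 2 / a i) * (\sum_i a i * v i ^+ 2) - (\sum_i c i * v i) ^+ 2).
  transitivity (\sum_i \sum_k (X i k + X k i - 2 * Z i k)).
    apply: eq_bigr => i _; apply: eq_bigr => k _.
    by rewrite /X /Z; field; rewrite !gt_eqF.
  rewrite expr2 !big_distrlr /=.
  under eq_bigr do rewrite sumrB big_split /=.
  rewrite sumrB big_split /= [T in _ + T - _]exchange_big /=.
  under [T in _ - T]eq_bigr do rewrite -mulr_sumr.
  by rewrite -mulr_sumr /X /Z; ring.
rewrite -subr_ge0 -(pmulr_rge0 _ (ltr0n R 2)) -lagrange.
apply: sumr_ge0 => i _; apply: sumr_ge0 => k _.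
by rewrite divr_ge0 ?sqr_ge0 // ltW // mulr_gt0.
Qed.

Lemma is_diff_sum (R : numFieldType) (V W : normedModType R) (I : Type)
    (r : seq I) (Q : pred I) (F dF : I -> V -> W) (x : V) :
  (forall i, is_diff x (F i) (dF i)) ->
  is_diff x (\sum_(i <- r | Q i) F i) (\sum_(i <- r | Q i) dF i).
Proof.
move=> F_diff; elim/big_rec2: _ => [|i ? ? _ ?]; first exact: is_diff_cst.
exact: is_diffD.
Qed.

Section RowVectors.
Context {R : realType} {P : nat}.
Implicit Types (u v g : 'rV[R]_P).

Lemma grad_sum (I : Type) (r : seq I) (Q : pred I) (c : I -> R)
    (h : I -> 'rV[R]_P -> R) (x : 'rV[R]_P) :
  (forall i, differentiable (h i) x) ->
  grad (fun y => \sum_(i <- r | Q i) c i * h i y) x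
  = \sum_(i <- r | Q i) c i *: grad (h i) x.
Proof.
move=> h_diff.
have sum_diff : is_diff x (\sum_(i <- r | Q i) c i *: h i)
    (\sum_(i <- r | Q i) c i *: ('d (h i) x : _ -> R)).
  by apply: is_diff_sum => i; apply/is_diffZ/differentiableP.
rewrite -fct_sumE; apply/rowP => j; rewrite !mxE diff_val summxE fct_sumE.
by apply: eq_bigr => i _; rewrite !mxE.
Qed.

Lemma sqnorm_ge0 v : 0 <= sqnorm v.
Proof. by apply: sumr_ge0 => j _; apply: sqr_ge0. Qed.

Lemma sqnorm_sum_le_weighted (I : finType) (a c : I -> R) (v : I -> 'rV[R]_P) :
  (forall i, 0 < a i) ->
  sqnorm (\sum_i c i *: v i)
  <= (\sum_i c i ^+ 2 / a i) * \sum_i a i * sqnorm (v i).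
Proof.
move=> a_gt0; rewrite /sqnorm.
under eq_bigr do rewrite summxE; under eq_bigr do under eq_bigr do rewrite mxE.
under [in X in _ <= _ * X]eq_bigr do rewrite mulr_sumr.
rewrite exchange_big mulr_sumr; apply: ler_sum => j _.
exact: sqr_sum_le_weighted.
Qed.

Lemma sqnorm_sub_comb_le g k (I : finType) (a w : I -> R) (u : I -> 'rV[R]_P) :
  (forall i, 0 < a i) -> \sum_i a i = 1 -> \sum_i w i = 1 ->
  (forall i, sqnorm (g - u i) <= k) ->
  sqnorm (\sum_i a i *: u i - \sum_i w i *: u i)
  <= (\sum_i (w i - a i) ^+ 2 / a i) * k.
Proof.
move=> a_gt0 sum_a sum_w u_near_g.
rewrite (sub_combE g); last by rewrite sum_a sum_w.
apply: le_trans; first exact: sqnorm_sum_le_weighted.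
apply: ler_wpM2l.
  by apply: sumr_ge0 => i _; rewrite divr_ge0 ?sqr_ge0 ?ltW.
rewrite -[leRHS]mul1r -sum_a mulr_suml; apply: ler_sum => i _.
by rewrite ler_pM2l.
Qed.

Context {L : nat} (blk : 'I_P -> 'I_L).

(* [grad_blk blk l F x] unfolds to [blk_proj l (grad F x)], so the lemmas
   below apply to the block gradients of the theorem by conversion. *)
Definition blk_proj (l : 'I_L) v : 'rV[R]_P :=
  \row_j (if blk j == l then v ord0 j else 0).

Fact blk_proj_is_linear l : linear (blk_proj l).
Proof.
move=> k u v; apply/rowP => j; rewrite !mxE.
by case: ifP; rewrite ?mulr0 ?addr0.
Qed.

HB.instance Definition _ l :=
  GRing.isLinear.Build R 'rV[R]_P 'rV[R]_P _ (blk_proj l) (blk_proj_is_linear l).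

Lemma sum_blk_proj_mxE (Q : pred 'I_L) (v : 'I_L -> 'rV[R]_P) j :
  (\sum_(l | Q l) blk_proj l (v l)) ord0 j
  = if Q (blk j) then v (blk j) ord0 j else 0.
Proof.
rewrite summxE -(sum_if_eq Q (blk j) (fun l => v l ord0 j)).
by apply: eq_bigr => l _; rewrite mxE.
Qed.

Lemma sqnorm_sum_blk_proj (Q : pred 'I_L) (v : 'I_L -> 'rV[R]_P) :
  sqnorm (\sum_(l | Q l) blk_proj l (v l))
  = \sum_(l | Q l) sqnorm (blk_proj l (v l)).
Proof.
rewrite /sqnorm exchange_big; apply: eq_bigr => j _ /=.
rewrite sum_blk_proj_mxE (fun_if (fun x => x ^+ 2)) expr0n /=.
rewrite -(sum_if_eq Q (blk j) (fun l => v l ord0 j ^+ 2)).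
by apply: eq_bigr => l _; rewrite mxE (fun_if (fun x => x ^+ 2)) expr0n.
Qed.

End RowVectors.

Section Weights.
Context {R : realType} {N L : nat} (d : 'I_N -> nat).
Context (S : {set 'I_N}) (Ls : 'I_N -> {set 'I_L}).

Lemma alpha_gt0 i : (0 < d i)%N -> 0 < alpha d i :> R.
Proof.
by move=> d_i; rewrite divr_gt0 ?ltr0n //; exact: (sumr_nat_gt0 _ _ i isT d_i).
Qed.

Lemma sum_alpha i0 : (0 < d i0)%N -> \sum_i alpha d i = 1 :> R.
Proof.
move=> d_i0; rewrite -mulr_suml mulfV // gt_eqF //.
exact: (sumr_nat_gt0 _ _ i0 isT d_i0).
Qed.

Lemma sum_weight l i0 : i0 \in S -> l \in Ls i0 -> (0 < d i0)%N ->
  \sum_i weight d S Ls i l = 1 :> R.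
Proof.
move=> i0_S l_i0 d_i0; rewrite -big_mkcond /= -mulr_suml mulfV // gt_eqF //.
by apply: (sumr_nat_gt0 _ _ i0 _ d_i0); rewrite i0_S l_i0.
Qed.

Lemma hsurE P (f : 'I_N -> 'rV[R]_P -> R) l :
  hsur d S Ls f l = fun x => \sum_i weight d S Ls i l * f i x.
Proof.
apply/funext => x; rewrite /hsur big_mkcond; apply: eq_bigr => i _.
by case: ifP => // i_S; rewrite /weight i_S mul0r.
Qed.

End Weights.

Theorem lemma2 (R : realType) (P N L : nat) (blk : 'I_P -> 'I_L)
  (d : 'I_N -> nat) (hd : forall i, (0 < d i)%N)
  (f : 'I_N -> 'rV[R]_P -> R)
  (hdiff : forall i (x : 'rV[R]_P), differentiable (f i) x)
  (S : {set 'I_N}) (Ls : 'I_N -> {set 'I_L})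
  (theta : 'rV[R]_P) (kappa : 'I_L -> R) (hkappa : forall l, 0 < kappa l)
  (hbound : forall (i : 'I_N) (l : 'I_L),
     sqnorm (grad_blk blk l (fglob d f) theta - grad_blk blk l (f i) theta)
       <= kappa l ^+ 2) :
  sqnorm (grad (fglob d f) theta
          - \sum_(l in Lunion S Ls) grad_blk blk l (hsur d S Ls f l) theta)
  <= 2 * sqnorm (\sum_(l in ~: Lunion S Ls) grad_blk blk l (fglob d f) theta)
     + 2 * (\sum_(l in Lunion S Ls) chi2 d S Ls l * kappa l ^+ 2).
Proof.
set g := grad (fglob d f) theta; set Lt := Lunion S Ls.
pose h l := grad (hsur d S Ls f l) theta.
have grad_f : g = \sum_i alpha d i *: grad (f i) theta by exact: grad_sum.
have grad_h l : h l = \sum_i weight d S Ls i l *: grad (f i) theta.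
  by rewrite /h hsurE; exact: grad_sum.
have errE : g - \sum_(l in Lt) grad_blk blk l (hsur d S Ls f l) theta
    = \sum_l blk_proj blk l (if l \in Lt then g - h l else g).
  apply/rowP => j; rewrite !mxE !sum_blk_proj_mxE.
  by case: ifP; rewrite ?mxE ?subr0.
have unselected :
    \sum_(l | l \notin Lt) sqnorm (blk_proj blk l (if l \in Lt then g - h l else g))
    = sqnorm (\sum_(l in ~: Lt) grad_blk blk l (fglob d f) theta).
  by rewrite sqnorm_sum_blk_proj; apply: eq_big => [l|l /negbTE ->]; rewrite ?inE.
have selected :
    \sum_(l in Lt) sqnorm (blk_proj blk l (if l \in Lt then g - h l else g))
    <= \sum_(l in Lt) chi2 d S Ls l * kappa l ^+ 2.
  apply: ler_sum => l l_Lt; rewrite l_Lt.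
  have [i0 i0_S l_i0] := bigcupP l_Lt.
  rewrite linearB grad_h grad_f [X in X - _]linear_sum [X in _ - X]linear_sum /=.
  under eq_bigr do rewrite linearZZ; under [X in _ - X]eq_bigr do rewrite linearZZ.
  apply: (sqnorm_sub_comb_le (blk_proj blk l g)) => [i|||i].
  - exact: alpha_gt0 (hd i).
  - exact: sum_alpha (hd i0).
  - exact: sum_weight i0_S l_i0 (hd i0).
  - exact: hbound.
rewrite errE sqnorm_sum_blk_proj (bigID (mem Lt)) /= unselected.
have := sqnorm_ge0 (\sum_(l in ~: Lt) grad_blk blk l (fglob d f) theta).
have : 0 <= \sum_(l in Lt) sqnorm (blk_proj blk l (if l \in Lt then g - h l else g)).
  by apply: sumr_ge0 => l _; apply: sqnorm_ge0.
lra.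
Qed.
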